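(* Consider algorithm DIST-OPT as described in the context (with arbitrary step size $\gamma>0$ and arbitrary problem data), and use the convention $\lambda_j(s)=0$ for $s\le 0$. (a) If all delays are zero ($\tau^{\uparrow}_j(t)=\tau^{\downarrow}_j(t)=0$ for all $j,t$), then for all $i\in\mathcal N$ and $t\in\mathbb N$, $$z_i^P(t)=\sum_{j=1}^N R_{ij}\lambda_j(t-d_{ij}),\qquad z_i^Q(t)=\sum_{j=1}^N X_{ij}\lambda_j(t-d_{ij}),$$ where $d_{ij}=0$ if $\texttt{dist}(i,j)\le1$ and $d_{ij}=\texttt{dist}(i,j)-1$ otherwise. (b) If all delays are bounded by $\tau_{\max}$, then for all $i\in\mathcal N$ and $t\in\mathbb N$ there exist integers $0\le\bar\tau_{ij}(t)\le(\tau_{\max}+1)d$ such that $$z_i^P(t)=\sum_{j=1}^N R_{ij}\lambda_j(t-\bar\tau_{ij}(t)),\qquad z_i^Q(t)=\sum_{j=1}^N X_{ij}\lambda_j(t-\bar\tau_{ij}(t)).$$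
   Context: Network: a radial network is a tree on nodes $\{0,1,\dots,N\}$ rooted at node $0$; $\mathcal N=\{1,\dots,N\}$. Each $i\in\mathcal N$ has a unique parent $\sigma_i\in\{0,\dots,N\}$. Each edge $(h,k)$ ($h$ the parent of $k$) has resistance $r_{hk}\ge0$ and reactance $x_{hk}\ge0$. $\mathcal P_i$ is the set of edges on the path from $0$ to $i$. Define $N\times N$ matrices $R_{ij}=2\sum_{(h,k)\in\mathcal P_i\cap\mathcal P_j}r_{hk}$ and $X_{ij}=2\sum_{(h,k)\in\mathcal P_i\cap\mathcal P_j}x_{hk}$. $\texttt{dist}(i,j)$ is the number of edges on the tree path between $i$ and $j$, and $d=\max_{i,j\in\mathcal N}\texttt{dist}(i,j)$. Voltage model: $v(p,q)=Rp+Xq+v_0\mathbf 1\in\mathbb R^N$ for a fixed $v_0\in\mathbb R$. Problem data: vectors $\underline v\le\bar v$, $\underline p\le\bar p$, $\underline q\le\bar q$ in $\mathbb R^N$ and reals $a_i^{P},a_i^{Q}>0$, $b_i^P,b_i^Q$. Algorithm DIST-OPT. For $i\in\mathcal N$, the algorithmic parent of $i$ is $\sigma_i$ if $\sigma_i\neq0$; if $\sigma_i=0$, $i$ has no algorithmic parent. Let $\mathcal C_i=\{j\in\mathcal N:\sigma_j=i\}$. For each $j\in\mathcal N$ having an algorithmic parent and each $t\in\mathbb N$, there are delays $\tau^{\uparrow}_j(t),\tau^{\downarrow}_j(t)\in\mathbb Z_{\ge0}$. Write $[x]_a^b=\min(\max(x,a),b)$ and $\lceil x\rceil_+=\max(x,0)$.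 Initialization ($t=0$): for all $i\in\mathcal N$, $z_i^P(0)=z_i^Q(0)=\underline\lambda_i(0)=\bar\lambda_i(0)=\lambda_i(0)=0$ and $\alpha_i(0)=\beta_i^P(0)=\beta_i^Q(0)=\hat\alpha_i(0)=\hat\beta_i^P(0)=\hat\beta_i^Q(0)=0$; any message $\alpha_i(s),\beta_i^P(s),\beta_i^Q(s)$ with $s<0$ is $0$; if $i$ has no algorithmic parent then $\hat\beta_i^P(t)=\hat\beta_i^Q(t)=0$ for all $t$. For $t=0,1,2,\dots$ and every $i\in\mathcal N$: (1) $p_i(t)=\bigl[(z_i^P(t)-b_i^P)/a_i^P\bigr]_{\underline p_i}^{\bar p_i}$ and $q_i(t)=\bigl[(z_i^Q(t)-b_i^Q)/a_i^Q\bigr]_{\underline q_i}^{\bar q_i}$. (2) $v(t)=v(p(t),q(t))$; $\underline\lambda_i(t+1)=\lceil\underline\lambda_i(t)+\gamma(\underline v_i-v_i(t))\rceil_+$, $\bar\lambda_i(t+1)=\lceil\bar\lambda_i(t)+\gamma(v_i(t)-\bar v_i)\rceil_+$, $\lambda_i(t+1)=\underline\lambda_i(t+1)-\bar\lambda_i(t+1)$, with step size $\gamma>0$. (3) $\alpha_i(t+1)=\lambda_i(t+1)+\sum_{j\in\mathcal C_i}\hat\alpha_j(t)$, and for each $j\in\mathcal C_i$: $\beta_j^P(t+1)=R_{ii}\bigl(\lambda_i(t+1)+\sum_{r\in\mathcal C_i\setminus\{j\}}\hat\alpha_r(t)\bigr)+\hat\beta_i^P(t)$ and $\beta_j^Q(t+1)=X_{ii}\bigl(\lambda_i(t+1)+\sum_{r\in\mathcal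 C_i\setminus\{j\}}\hat\alpha_r(t)\bigr)+\hat\beta_i^Q(t)$. For each $j$ with an algorithmic parent: $\hat\alpha_j(t+1)=\alpha_j(t+1-\tau^{\uparrow}_j(t))$, $\hat\beta_j^P(t+1)=\beta_j^P(t+1-\tau^{\downarrow}_j(t))$, $\hat\beta_j^Q(t+1)=\beta_j^Q(t+1-\tau^{\downarrow}_j(t))$. (4) $z_i^P(t+1)=R_{ii}\bigl(\lambda_i(t+1)+\sum_{j\in\mathcal C_i}\hat\alpha_j(t+1)\bigr)+\hat\beta_i^P(t+1)$ and $z_i^Q(t+1)=X_{ii}\bigl(\lambda_i(t+1)+\sum_{j\in\mathcal C_i}\hat\alpha_j(t+1)\bigr)+\hat\beta_i^Q(t+1)$. *)

From HB Require Import structures.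
From mathcomp Require Import all_boot all_order all_algebra.
Set Implicit Arguments. Unset Strict Implicit. Unset Printing Implicit Defensive.
Import Order.TTheory GRing.Theory Num.Theory.
Local Open Scope ring_scope.

(* Tree encoding: the non-root nodes 1..N are the ordinals 'I_N (node i+1 is
   the ordinal i); the root 0 is [None].  [par k] is the parent sigma_k
   (None = root).  The edge (sigma_k, k) is identified with its child k, so
   r k = r_{sigma_k k} and x k = x_{sigma_k k}. *)

Definition up (N : nat) (par : 'I_N -> option 'I_N) (o : option 'I_N)
  : option 'I_N := if o is Some k then par k else None.

Definition upn (N : nat) (par : 'I_N -> option 'I_N) (n : nat) (i : 'I_N)
  : option 'I_N := iter n (up par) (Some i).

Definition is_tree (N : nat) (par : 'I_N -> option 'I_N) : Prop :=
  forall i : 'I_N, exists n, upn par n i = None.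

(* the edge with child k lies on the path P_i from 0 to i
   (k is i or an ancestor of i; in a tree depth <= N so n <= N suffices) *)
Definition on_path (N : nat) (par : 'I_N -> option 'I_N) (i k : 'I_N) : bool :=
  [exists n : 'I_(N.+1), upn par n i == Some k].

(* R_ij = 2 * sum of r over P_i /\ P_j  (also used for X with x) *)
Definition Rmat (R : nzRingType) (N : nat) (par : 'I_N -> option 'I_N)
  (r : 'I_N -> R) (i j : 'I_N) : R :=
  2 * \sum_(k : 'I_N | on_path par i k && on_path par j k) r k.

(* dist(i,j): number of edges of the tree path between i and j
   = least a+b such that the a-th ancestor of i equals the b-th ancestor of j *)
Definition tdist (N : nat) (par : 'I_N -> option 'I_N) (i j : 'I_N) : nat :=
  \big[minn/(N + N)%N]_(a < N.+1)
    \big[minn/(N + N)%N]_(b < N.+1 | upn par a i == upn par b j) (a + b)%N.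

Definition diam (N : nat) (par : 'I_N -> option 'I_N) : nat :=
  \max_(i < N) \max_(j < N) tdist par i j.

Definition dij (N : nat) (par : 'I_N -> option 'I_N) (i j : 'I_N) : nat :=
  if (tdist par i j <= 1)%N then 0%N else (tdist par i j - 1)%N.

Definition clamp (R : realFieldType) (x a b : R) : R := Num.min (Num.max x a) b.
Definition posp (R : realFieldType) (x : R) : R := Num.max x 0.

(* Messages at negative
   times are represented via truncated nat subtraction hitting time 0, where
   all messages are 0. *)
Record DistOptRun (R : realFieldType) (N : nat) (par : 'I_N -> option 'I_N)
  (r x : 'I_N -> R) (v0 : R) (vlo vhi plo phi qlo qhi aP aQ bP bQ : 'I_N -> R)
  (gamma : R) (tau_up tau_dn : 'I_N -> nat -> nat)
  (p q v llo lhi lam zP zQ alpha betaP betaQ ahat bPhat bQhat : nat -> 'I_N -> R)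
  : Prop := {
  init_zP : forall i, zP 0%N i = 0;
  init_zQ : forall i, zQ 0%N i = 0;
  init_llo : forall i, llo 0%N i = 0;
  init_lhi : forall i, lhi 0%N i = 0;
  init_lam : forall i, lam 0%N i = 0;
  init_alpha : forall i, alpha 0%N i = 0;
  init_betaP : forall i, betaP 0%N i = 0;
  init_betaQ : forall i, betaQ 0%N i = 0;
  init_ahat : forall i, ahat 0%N i = 0;
  init_bPhat : forall i, bPhat 0%N i = 0;
  init_bQhat : forall i, bQhat 0%N i = 0;
  root_bPhat : forall t i, par i = None -> bPhat t i = 0;
  root_bQhat : forall t i, par i = None -> bQhat t i = 0;
  step_p : forall t i, p t i = clamp ((zP t i - bP i) / aP i) (plo i) (phi i);
  step_q : forall t i, q t i = clamp ((zQ t i - bQ i) / aQ i) (qlo i) (qhi i);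
  step_v : forall t i, v t i = \sum_(j : 'I_N) Rmat par r i j * p t j
                              + \sum_(j : 'I_N) Rmat par x i j * q t j + v0;
  step_llo : forall t i, llo t.+1 i = posp (llo t i + gamma * (vlo i - v t i));
  step_lhi : forall t i, lhi t.+1 i = posp (lhi t i + gamma * (v t i - vhi i));
  step_lam : forall t i, lam t.+1 i = llo t.+1 i - lhi t.+1 i;
  step_alpha : forall t i,
    alpha t.+1 i = lam t.+1 i + \sum_(j : 'I_N | par j == Some i) ahat t j;
  step_betaP : forall t i j, par j = Some i ->
    betaP t.+1 j = Rmat par r i i *
      (lam t.+1 i + \sum_(k : 'I_N | (par k == Some i) && (k != j)) ahat t k)
      + bPhat t i;
  step_betaQ : forall t i j, par j = Some i ->
    betaQ t.+1 j = Rmat par x i i *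
      (lam t.+1 i + \sum_(k : 'I_N | (par k == Some i) && (k != j)) ahat t k)
      + bQhat t i;
  step_ahat : forall t j, par j <> None ->
    ahat t.+1 j = alpha (t.+1 - tau_up j t)%N j;
  step_bPhat : forall t j, par j <> None ->
    bPhat t.+1 j = betaP (t.+1 - tau_dn j t)%N j;
  step_bQhat : forall t j, par j <> None ->
    bQhat t.+1 j = betaQ (t.+1 - tau_dn j t)%N j;
  step_zP : forall t i,
    zP t.+1 i = Rmat par r i i *
      (lam t.+1 i + \sum_(j : 'I_N | par j == Some i) ahat t.+1 j) + bPhat t.+1 i;
  step_zQ : forall t i,
    zQ t.+1 i = Rmat par x i i *
      (lam t.+1 i + \sum_(j : 'I_N | par j == Some i) ahat t.+1 j) + bQhat t.+1 i
}.

(* Say that [k] lies below [i] when the edge into [i] lies on the path from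
   the root to [k].  Every message of DIST-OPT at time t is a sum of terms
   c_k lambda_k(t - s_k) whose delays s_k are controlled by tree distances:
   - alpha_i and its received copy carry lambda_k for the nodes k below i,
     with delays between dist(i,k) and (tau+1) dist(i,k) (+ tau on receipt);
   - beta_j and its received copy carry R_jk lambda_k for the nodes k not
     below j, with delays between dist(j,k)-1 and (tau+1)(dist(j,k)-1) (+ tau);
   - hence z_i carries R_ik lambda_k for every k, with delays between
     dist(i,k)-1 and (tau+1) dist(i,k)-1.
   The file first develops the tree encoded by [par]: depths, ancestors, the
   child of i leading to a descendant k, the distance and how it and R_ik
   change along an edge.  The four message invariants are then proved by
   strong induction on time, and the theorem follows: with zero delays the
   delay bounds collapse to dist(i,k)-1 = d_ik, and in general
   (tau+1) dist(i,k) - 1 <= (tau+1) d. *)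

From HB Require Import structures.
From mathcomp Require Import all_boot all_order all_algebra zify.
Set Implicit Arguments. Unset Strict Implicit. Unset Printing Implicit Defensive.
Import Order.TTheory GRing.Theory Num.Theory.

Lemma bigminn_le (I : finType) (P : pred I) (F : I -> nat) m i0 :
  P i0 -> \big[minn/m]_(i | P i) F i <= F i0.
Proof.
move=> Pi0; have : i0 \in index_enum I := mem_index_enum i0.
elim: (index_enum I) => //= a s IH; rewrite big_cons in_cons.
case/orP => [/eqP <-|/IH le_F]; first by rewrite Pi0 geq_minl.
by case: (P a) => //; rewrite geq_min le_F orbT.
Qed.

Lemma bigminn_mem (I : finType) (P : pred I) (F : I -> nat) m :
  \big[minn/m]_(i | P i) F i = m \/
  exists2 i, P i & \big[minn/m]_(i | P i) F i = F i.
Proof.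
apply: (big_ind (fun y => y = m \/ exists2 i, P i & y = F i)); first by left.
  by move=> y1 y2 H1 H2; rewrite /minn; case: ifP.
by move=> i Pi; right; exists i.
Qed.

Section Tree.
Variables (N : nat) (par : 'I_N -> option 'I_N).
Hypothesis tree : is_tree par.

(* [anc e k]: node [e] is [k] or an ancestor of [k], i.e. the edge into [e]
   lies on the path P_k from the root to [k]. *)
Local Notation anc e k := (on_path par k e).
Local Notation dist := (tdist par).

Lemma choose_on_nonroots (U : Type) (u0 : U) (P : 'I_N -> U -> Prop) :
  (forall j, par j <> None -> exists u, P j u) ->
  exists f, forall j, par j <> None -> P j (f j).
Proof.
move=> ex; apply: (fin_all_exists (P := fun j u => par j <> None -> P j u)) => j.
by case: (par j =P None) => [pj|/ex[u Pu]]; [exists u0 | exists u].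
Qed.

Lemma iter_up_None n : iter n (up par) None = None.
Proof. by elim: n => //= n ->. Qed.

Lemma upnD m n i : upn par (m + n) i = iter m (up par) (upn par n i).
Proof. by rewrite /upn iterD. Qed.

Lemma upnS n i : upn par n.+1 i = iter n (up par) (par i).
Proof. by rewrite /upn iterSr. Qed.

Lemma reaches_root i : exists n, upn par n i == None.
Proof. by have [n E] := tree i; exists n; rewrite E. Qed.

Definition depth i := ex_minn (reaches_root i).

Lemma upn_None i n : (upn par n i == None) = (depth i <= n).
Proof.
rewrite /depth; case: ex_minnP => m /eqP Hm Hmin.
apply/idP/idP; first exact: Hmin.
by move=> le_mn; rewrite -(subnK le_mn) upnD Hm iter_up_None.
Qed.

Lemma depth_upn n i y : upn par n i = Some y -> depth i = n + depth y.
Proof.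
move=> Hy.
have E m : (depth y <= m) = (depth i <= m + n) by rewrite -!upn_None upnD Hy.
have lt_n : n < depth i by rewrite ltnNge -upn_None Hy.
have := E (depth y); rewrite leqnn => le_i.
have := E (depth i - n); rewrite subnK ?(ltnW lt_n) // leqnn => le_y.
lia.
Qed.

Lemma upn_lt_depth n i y : upn par n i = Some y -> n < depth i.
Proof. by move=> Hy; rewrite ltnNge -upn_None Hy. Qed.

Lemma upn_Some n i : n < depth i -> upn par n i = Some (odflt i (upn par n i)).
Proof. by case E: upn => // lt_n; move: (upn_None i n); rewrite E eqxx; lia. Qed.

Lemma depth_par j i : par j = Some i -> depth j = (depth i).+1.
Proof. by move=> pj; have := depth_upn (n := 1) pj; lia. Qed.

(* The ancestors of [i] at heights below its depth are pairwise distinct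
   nodes, hence the depth is at most [N]. *)
Lemma depth_le i : depth i <= N.
Proof.
pose f (m : 'I_(depth i)) := odflt i (upn par m i).
suff /leq_card : injective f by rewrite !card_ord.
move=> a b Eab; apply: ord_inj.
have := depth_upn (upn_Some (ltn_ord a)); have := depth_upn (upn_Some (ltn_ord b)).
by rewrite -/(f a) -/(f b) Eab; lia.
Qed.

Lemma ancP e k : reflect (exists n, upn par n k = Some e) (anc e k).
Proof.
apply: (iffP existsP) => [[n /eqP H]|[n H]]; first by exists n.
have lt_n : n < N.+1 by have := upn_lt_depth H; have := depth_le k; lia.
by exists (Ordinal lt_n); apply/eqP.
Qed.

Lemma anc_refl e : anc e e.
Proof. by apply/ancP; exists 0. Qed.

Lemma anc_trans a b c : anc a b -> anc b c -> anc a c.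
Proof.
by move=> /ancP[n Hn] /ancP[m Hm]; apply/ancP; exists (n + m); rewrite upnD Hm.
Qed.

Lemma anc_par j i e : par j = Some i -> anc e j = (e == j) || anc e i.
Proof.
move=> pj; apply/idP/idP.
  case/ancP => [[|n]]; first by case=> ->; rewrite eqxx.
  by rewrite upnS pj => H; apply/orP; right; apply/ancP; exists n.
case/orP => [/eqP ->|/ancP[n H]]; first exact: anc_refl.
by apply/ancP; exists n.+1; rewrite upnS pj.
Qed.

Lemma anc_root j e : par j = None -> anc e j = (e == j).
Proof.
move=> pj; apply/idP/idP; last by move/eqP->; exact: anc_refl.
case/ancP => [[|n]]; first by case=> ->; rewrite eqxx.
by rewrite upnS pj iter_up_None.
Qed.

Lemma anc_up j i k : par j = Some i -> anc j k -> anc i k.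
Proof. by move=> pj; apply: anc_trans; rewrite (anc_par _ pj) anc_refl orbT. Qed.

Lemma child_not_anc j i : par j = Some i -> ~~ anc j i.
Proof.
move=> pj; apply/negP => /ancP[n H].
by have := depth_upn H; have := depth_par pj; lia.
Qed.

Lemma anc_total a b k : anc a k -> anc b k -> anc a b || anc b a.
Proof.
move=> /ancP[n Hn] /ancP[m Hm]; case: (leqP n m) => le_nm.
  by apply/orP; right; apply/ancP; exists (m - n); rewrite -(subnK le_nm) upnD Hn in Hm.
apply/orP; left; apply/ancP; exists (n - m).
by rewrite -(subnK (ltnW le_nm)) upnD Hm in Hn.
Qed.

Lemma child_uniq c c' i k : par c = Some i -> par c' = Some i ->
  anc c k -> anc c' k -> c = c'.
Proof.
move=> pc pc' ack ack'; case/orP: (anc_total ack ack') => H.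
  rewrite (anc_par _ pc') in H; case/orP: H => [/eqP //|H].
  by have := child_not_anc pc; rewrite H.
rewrite (anc_par _ pc) in H; case/orP: H => [/eqP //|H].
by have := child_not_anc pc'; rewrite H.
Qed.

Lemma anc_child i k : anc i k -> k != i -> exists2 j, par j = Some i & anc j k.
Proof.
case/ancP => [[|n] H ne]; first by case: H ne => ->; rewrite eqxx.
have lt_n : n < depth k by have := upn_lt_depth H; lia.
exists (odflt k (upn par n k)); last by apply/ancP; exists n; rewrite -upn_Some.
by move: H; rewrite -add1n upnD (upn_Some lt_n).
Qed.

Definition child_to i k := odflt k [pick j | (par j == Some i) && anc j k].

Lemma child_toP i k : anc i k -> k != i ->
  par (child_to i k) = Some i /\ anc (child_to i k) k.
Proof.
move=> aik ne; rewrite /child_to; case: pickP => [j /andP[/eqP ? ?] //|H].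
have [j pj ajk] := anc_child aik ne.
by move: (H j); rewrite pj eqxx ajk.
Qed.

Lemma child_to_eq i k j : par j = Some i -> anc j k -> child_to i k = j.
Proof.
move=> pj ajk; have aik := anc_up pj ajk.
have ne : k != i by apply/eqP => E; move: (child_not_anc pj); rewrite -E ajk.
have [pc ack] := child_toP aik ne; exact: child_uniq pc pj ack ajk.
Qed.

Lemma some_nonroot j i : par j = Some i -> par j <> None.
Proof. by move=> ->. Qed.

Lemma sum_children (T : nmodType) (Q : pred 'I_N) i (f : 'I_N -> 'I_N -> T) :
  (\sum_(j | (par j == Some i) && Q j) \sum_(k | anc j k) f j k
   = \sum_(k | anc i k && (k != i) && Q (child_to i k)) f (child_to i k) k)%R.
Proof.
rewrite [RHS](partition_big (child_to i) (fun j => (par j == Some i) && Q j)) /=; last first.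
  by move=> k /andP[/andP[aik ne] Qc]; rewrite (child_toP aik ne).1 eqxx.
apply: eq_bigr => j /andP[/eqP pj Qj]; apply: eq_big => k; last first.
  by move=> ajk; rewrite (child_to_eq pj ajk).
apply/idP/idP => [ajk|/andP[/andP[/andP[aik ne] _] /eqP <-]]; last first.
  exact: (child_toP aik ne).2.
have ne : k != i by apply: contraTneq ajk => ->; exact: child_not_anc pj.
by rewrite (anc_up pj ajk) ne (child_to_eq pj ajk) Qj eqxx.
Qed.

Lemma dist_le i k a b : a <= N -> b <= N ->
  upn par a i = upn par b k -> dist i k <= a + b.
Proof.
move=> le_a le_b E; rewrite /tdist.
have lt_a : a < N.+1 by lia.
have lt_b : b < N.+1 by lia.
apply: leq_trans (@bigminn_le _ xpredT _ _ (Ordinal lt_a) isT) _.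
by apply: (@bigminn_le _ _ _ _ (Ordinal lt_b)); rewrite /= E.
Qed.

Lemma dist_cases i k : dist i k = N + N \/
  exists a b : 'I_N.+1, upn par a i = upn par b k /\ dist i k = a + b.
Proof.
rewrite /tdist; pose meet (a b : 'I_N.+1) := upn par a i == upn par b k.
have [->|[a _ ->]] := bigminn_mem xpredT
  (fun a : 'I_N.+1 => \big[minn/(N + N)]_(b < N.+1 | meet a b) (a + b)) (N + N).
  by left.
have [->|[b /eqP E ->]] := bigminn_mem (meet a) (fun b : 'I_N.+1 => a + b) (N + N).
  by left.
by right; exists a, b.
Qed.

Lemma dist_witness i k : exists a b, [/\ a <= depth i, b <= depth k,
  upn par a i = upn par b k & dist i k = a + b].
Proof.
have Eroot : upn par (depth i) i = upn par (depth k) k.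
  by move: (upn_None i (depth i)) (upn_None k (depth k)); rewrite !leqnn => /eqP-> /eqP->.
have := dist_le (depth_le i) (depth_le k) Eroot.
have := depth_le i; have := depth_le k.
case: (dist_cases i k) => [->|[a [b [E ->]]]] lek lei le_dist.
  by exists (depth i), (depth k); split => //; lia.
have ge_a : depth i <= a -> depth k <= b by rewrite -!upn_None E.
have ge_b : depth k <= b -> depth i <= a by rewrite -!upn_None E.
by exists a, b; split => //; lia.
Qed.

Lemma dist_self i : dist i i = 0.
Proof. by have := @dist_le i i 0 0 (leq0n N) (leq0n N) erefl; lia. Qed.

Lemma dist_eq0 i k : dist i k = 0 -> k = i.
Proof.
move=> D0; have [a [b [_ _ E Dab]]] := dist_witness i k.
have [a0 b0] : a = 0 /\ b = 0 by lia.
by move: E; rewrite a0 b0 => -[].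
Qed.

Lemma dist_gt0 i k : k != i -> 0 < dist i k.
Proof. by move=> ne; rewrite lt0n; apply: contra ne => /eqP/dist_eq0 ->. Qed.

Lemma dist_upn y k h : upn par h k = Some y -> dist y k = h.
Proof.
move=> H; apply/eqP; rewrite eqn_leq; apply/andP; split.
  have le_h : h <= N by have := upn_lt_depth H; have := depth_le k; lia.
  by have := @dist_le y k 0 h (leq0n N) le_h; rewrite H; apply.
have [a [b [_ _ E ->]]] := dist_witness y k.
have dk := depth_upn H.
case Ea: (upn par a y) E => [z|] E.
  by have := depth_upn Ea; have := depth_upn (esym E); lia.
have : depth y <= a by rewrite -upn_None Ea.
have : depth k <= b by rewrite -upn_None -E.
lia.
Qed.

Lemma dist_par_anc j i k : par j = Some i -> anc j k -> dist i k = (dist j k).+1.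
Proof.
move=> pj /ancP[h H].
have H' : upn par h.+1 k = Some i by rewrite -add1n upnD H.
by rewrite (dist_upn H) (dist_upn H').
Qed.

Lemma dist_par_nanc j i k : par j = Some i -> ~~ anc j k -> dist j k = (dist i k).+1.
Proof.
move=> pj njk; have := depth_par pj; have := depth_le j; have := depth_le k.
move=> le_k le_j dj; apply/eqP; rewrite eqn_leq; apply/andP; split.
  have [a [b [le_a le_b E ->]]] := dist_witness i k.
  by rewrite -addSn; apply: dist_le; [lia | lia | rewrite upnS pj].
have [[|a] [b [le_a le_b E ->]]] := dist_witness j k.
  by move: njk; rewrite (introT (ancP j k)) //; exists b.
by move: E; rewrite upnS pj => /(dist_le _ _); lia.
Qed.

Local Open Scope ring_scope.

Lemma Rmat_anc (T : nzRingType) (rr : 'I_N -> T) i k :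
  anc i k -> Rmat par rr i k = Rmat par rr i i.
Proof.
move=> aik; rewrite /Rmat; congr (_ * _); apply: eq_bigl => e; rewrite andbb.
by apply/andP/idP => [[]//|aei]; split => //; exact: anc_trans aei aik.
Qed.

Lemma Rmat_child (T : nzRingType) (rr : 'I_N -> T) j i k :
  par j = Some i -> ~~ anc j k -> Rmat par rr j k = Rmat par rr i k.
Proof.
move=> pj njk; rewrite /Rmat; congr (_ * _); apply: eq_bigl => e.
by rewrite (anc_par _ pj); case: (e =P j) => [->|] //=; rewrite (negbTE njk) !andbF.
Qed.

Lemma Rmat_root (T : nzRingType) (rr : 'I_N -> T) j k :
  par j = None -> ~~ anc j k -> Rmat par rr j k = 0.
Proof.
move=> pj njk; rewrite /Rmat big_pred0 ?mulr0 // => e.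
by rewrite (anc_root _ pj); case: (e =P j) => [->|] //=; rewrite (negbTE njk).
Qed.

Lemma Rmat_diag_sum (T : nzRingType) (rr : 'I_N -> T) i (A : pred 'I_N)
    (g : 'I_N -> T) : (forall k, A k -> anc i k) ->
  Rmat par rr i i * \sum_(k | A k) g k = \sum_(k | A k) Rmat par rr i k * g k.
Proof.
by move=> Ai; rewrite mulr_sumr; apply: eq_bigr => k /Ai aik; rewrite (Rmat_anc rr aik).
Qed.

Section Run.
Variable R : realFieldType.
Variables (r x : 'I_N -> R) (v0 : R) (vlo vhi plo phi qlo qhi aP aQ bP bQ : 'I_N -> R).
Variables (gamma : R) (tau_up tau_dn : 'I_N -> nat -> nat).
Variables (p q v llo lhi lam zP zQ alpha betaP betaQ ahat bPhat bQhat : nat -> 'I_N -> R).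
Hypothesis run : DistOptRun par r x v0 vlo vhi plo phi qlo qhi aP aQ bP bQ gamma
  tau_up tau_dn p q v llo lhi lam zP zQ alpha betaP betaQ ahat bPhat bQhat.
Variable tau : nat.
Hypothesis delay_bound : forall j t, par j <> None ->
  (tau_up j t <= tau)%N /\ (tau_dn j t <= tau)%N.

Definition alpha_inv t i (s : 'I_N -> nat) :=
  (forall k, anc i k -> dist i k <= s k <= (tau + 1) * dist i k)%N /\
  alpha t i = \sum_(k | anc i k) lam (t - s k)%N k.

Definition ahat_inv t j (s : 'I_N -> nat) :=
  (forall k, anc j k -> dist j k <= s k <= tau + (tau + 1) * dist j k)%N /\
  ahat t j = \sum_(k | anc j k) lam (t - s k)%N k.

Definition beta_inv t j (s : 'I_N -> nat) :=
  (forall k, ~~ anc j k -> (dist j k).-1 <= s k <= (tau + 1) * (dist j k).-1)%N /\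
  betaP t j = \sum_(k | ~~ anc j k) Rmat par r j k * lam (t - s k)%N k /\
  betaQ t j = \sum_(k | ~~ anc j k) Rmat par x j k * lam (t - s k)%N k.

Definition bhat_inv t j (s : 'I_N -> nat) :=
  (forall k, ~~ anc j k ->
     (dist j k).-1 <= s k <= tau + (tau + 1) * (dist j k).-1)%N /\
  bPhat t j = \sum_(k | ~~ anc j k) Rmat par r j k * lam (t - s k)%N k /\
  bQhat t j = \sum_(k | ~~ anc j k) Rmat par x j k * lam (t - s k)%N k.

Definition z_inv t i (s : 'I_N -> nat) :=
  (forall k, (dist i k).-1 <= s k <= ((tau + 1) * dist i k).-1)%N /\
  zP t i = \sum_k Rmat par r i k * lam (t - s k)%N k /\
  zQ t i = \sum_k Rmat par x i k * lam (t - s k)%N k.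

Lemma lam_before0 n k : lam (0 - n)%N k = 0.
Proof. by rewrite sub0n (init_lam run). Qed.

Lemma lam_sum0 (A : pred 'I_N) (c : 'I_N -> R) (s : 'I_N -> nat) :
  \sum_(k | A k) c k * lam (0 - s k)%N k = 0.
Proof. by apply: big1 => k _; rewrite lam_before0 mulr0. Qed.

Lemma children_ahat t i (Q : pred 'I_N) Sh :
  (forall j, par j <> None -> ahat_inv t j (Sh j)) ->
  \sum_(j | (par j == Some i) && Q j) ahat t j =
  \sum_(k | anc i k && (k != i) && Q (child_to i k)) lam (t - Sh (child_to i k) k)%N k.
Proof.
move=> HA; rewrite -(sum_children Q i (fun c k => lam (t - Sh c k)%N k)).
apply: eq_bigr => j /andP[/eqP pj _].
exact: (HA j (some_nonroot pj)).2.
Qed.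

Lemma children_ahat_all t i Sh :
  (forall j, par j <> None -> ahat_inv t j (Sh j)) ->
  \sum_(j | par j == Some i) ahat t j =
  \sum_(k | anc i k && (k != i)) lam (t - Sh (child_to i k) k)%N k.
Proof.
move=> HA; rewrite (eq_bigl _ _ (fun j => esym (andbT (par j == Some i)))).
by rewrite (children_ahat i xpredT HA); apply: eq_bigl => k; rewrite andbT.
Qed.

Definition alpha_delay i (Sh : 'I_N -> 'I_N -> nat) k :=
  if k == i then 0%N else (Sh (child_to i k) k).+1.

Lemma alpha_step t : (forall j, par j <> None -> exists s, ahat_inv t j s) ->
  forall i, exists s, alpha_inv t.+1 i s.
Proof.
move=> /(choose_on_nonroots (fun=> 0%N))[Sh HA] i.
exists (alpha_delay i Sh); split.
  move=> k aik; rewrite /alpha_delay; case: (k =P i) => [->|/eqP ne].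
    by rewrite dist_self.
  have [pc ack] := child_toP aik ne.
  by have := (HA _ (some_nonroot pc)).1 k ack; rewrite (dist_par_anc pc ack); nia.
rewrite (step_alpha run) (children_ahat_all i HA) [RHS](bigD1 i) ?anc_refl //=.
rewrite /alpha_delay eqxx subn0; congr (_ + _).
by apply: eq_bigr => k /andP[_ ne]; rewrite (negbTE ne) subSS.
Qed.

Lemma ahat_step t j s : par j <> None -> alpha_inv (t.+1 - tau_up j t) j s ->
  ahat_inv t.+1 j (fun k => tau_up j t + s k)%N.
Proof.
move=> pj [bounds E]; have [le_up _] := delay_bound t pj; split.
  by move=> k ajk; have := bounds k ajk; nia.
by rewrite (step_ahat run) // E; apply: eq_bigr => k _; rewrite subnDA.
Qed.

Definition beta_delay i (Sh : 'I_N -> 'I_N -> nat) (Sb : 'I_N -> nat) k :=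
  if k == i then 0%N else if anc i k then (Sh (child_to i k) k).+1 else (Sb k).+1.

(* The update of beta_j: the nodes not below [j] are [i], the descendants of
   [i] through its other children, and the nodes not below [i]. *)
Lemma beta_step_eq t (rr : 'I_N -> R) j i Sh Sb : par j = Some i ->
  (forall c, par c <> None -> ahat_inv t c (Sh c)) ->
  Rmat par rr i i * (lam t.+1 i + \sum_(c | (par c == Some i) && (c != j)) ahat t c)
    + \sum_(k | ~~ anc i k) Rmat par rr i k * lam (t - Sb k)%N k
  = \sum_(k | ~~ anc j k) Rmat par rr j k * lam (t.+1 - beta_delay i Sh Sb k)%N k.
Proof.
move=> pj HA; have nji := child_not_anc pj.
rewrite mulrDr (children_ahat i (predC1 j) HA) Rmat_diag_sum; last first.
  by move=> k /andP[/andP[]].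
rewrite [RHS](bigID (fun k => anc i k)) /= [in RHS](bigD1 i) /=; last by rewrite nji anc_refl.
rewrite /beta_delay eqxx subn0 (Rmat_child rr pj nji); congr (_ + _ + _).
  apply: eq_big => k.
    apply/idP/idP => [/andP[/andP[aik ne] cj]|/andP[/andP[njk aik] ne]].
      rewrite aik ne andbT andbT; apply: contra cj => ajk.
      by rewrite (child_to_eq pj ajk).
    rewrite aik ne /=; apply: contra njk => /eqP cj.
    by rewrite -cj; exact: (child_toP aik ne).2.
  move=> /andP[/andP[aik ne] cj].
  have njk : ~~ anc j k by apply: contra cj => ajk; rewrite (child_to_eq pj ajk).
  by rewrite (negbTE ne) aik subSS (Rmat_child rr pj njk).
apply: eq_big => k.
  by apply/idP/idP => [nik|/andP[]//]; rewrite nik andbT; apply: contra nik; exact: anc_up.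
move=> nik; have njk : ~~ anc j k by apply: contra nik; exact: anc_up.
have ne : k != i by apply: contraNneq nik => ->; exact: anc_refl.
by rewrite (negbTE ne) (negbTE nik) subSS (Rmat_child rr pj njk).
Qed.

Lemma beta_step t : (forall j, par j <> None -> exists s, ahat_inv t j s) ->
  (forall j, exists s, bhat_inv t j s) ->
  forall j, par j <> None -> exists s, beta_inv t.+1 j s.
Proof.
move=> /(choose_on_nonroots (fun=> 0%N))[Sh HA] /fin_all_exists[Sb HB] j.
case pj: (par j) => [i|] // _; have nji := child_not_anc pj.
exists (beta_delay i Sh (Sb i)); split; [|split].
- move=> k njk; rewrite /beta_delay (dist_par_nanc pj njk) /=.
  case: (k =P i) => [->|/eqP ne]; first by rewrite dist_self.
  case: ifP => aik.
    have [pc ack] := child_toP aik ne.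
    by have := (HA _ (some_nonroot pc)).1 k ack; rewrite (dist_par_anc pc ack); nia.
  by have := (HB i).1 k (negbT aik); have := dist_gt0 ne; nia.
- by rewrite (step_betaP run _ pj) (HB i).2.1; apply: beta_step_eq.
- by rewrite (step_betaQ run _ pj) (HB i).2.2; apply: beta_step_eq.
Qed.

Lemma bhat_step t j s : par j <> None -> beta_inv (t.+1 - tau_dn j t) j s ->
  bhat_inv t.+1 j (fun k => tau_dn j t + s k)%N.
Proof.
move=> pj [bounds [EP EQ]]; have [_ le_dn] := delay_bound t pj; split; [|split].
- by move=> k njk; have := bounds k njk; nia.
- by rewrite (step_bPhat run) // EP; apply: eq_bigr => k _; rewrite subnDA.
- by rewrite (step_bQhat run) // EQ; apply: eq_bigr => k _; rewrite subnDA.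
Qed.

(* A node hanging from the root 0 receives no message from above, and indeed
   R_jk = 0 for every node [k] outside its subtree. *)
Lemma bhat_root t j : par j = None -> bhat_inv t j (fun k => (dist j k).-1).
Proof.
move=> pj; split; [|split].
- by move=> k _; nia.
- by rewrite (root_bPhat run) // big1 // => k njk; rewrite Rmat_root ?mul0r.
- by rewrite (root_bQhat run) // big1 // => k njk; rewrite Rmat_root ?mul0r.
Qed.

(* Every message at every time is a delayed combination as described above;
   by strong induction on time, since a message at time t+1 is built from
   messages sent at times t+1-tau, ..., t+1. *)
Lemma messages_invariant t :
  [/\ forall i, exists s, alpha_inv t i s,
      forall j, par j <> None -> exists s, ahat_inv t j s,
      forall j, par j <> None -> exists s, beta_inv t j s &
      forall j, exists s, bhat_inv t j s].
Proof.
elim/ltn_ind: t => -[_|t IH].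
  split=> [i|j _|j _|j].
  - exists (dist i); split=> [k _|]; first by nia.
    by rewrite (init_alpha run) big1 // => k _; rewrite lam_before0.
  - exists (dist j); split=> [k _|]; first by nia.
    by rewrite (init_ahat run) big1 // => k _; rewrite lam_before0.
  - exists (fun k => (dist j k).-1); split=> [k _|]; first by nia.
    by rewrite (init_betaP run) (init_betaQ run) !lam_sum0.
  - exists (fun k => (dist j k).-1); split=> [k _|]; first by nia.
    by rewrite (init_bPhat run) (init_bQhat run) !lam_sum0.
have [_ ahat_t _ bhat_t] := IH t (ltnSn t).
have alpha_upto t' : (t' <= t.+1)%N -> forall i, exists s, alpha_inv t' i s.
  by rewrite leq_eqVlt => /orP[/eqP->|/IH[A _ _ _] //]; exact: alpha_step.
have beta_upto t' : (t' <= t.+1)%N ->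
    forall j, par j <> None -> exists s, beta_inv t' j s.
  by rewrite leq_eqVlt => /orP[/eqP->|/IH[_ _ B _] //]; exact: beta_step.
split.
- exact: alpha_upto.
- move=> j pj; have [s Hs] := alpha_upto _ (leq_subr (tau_up j t) t.+1) j.
  by exists (fun k => tau_up j t + s k)%N; exact: ahat_step.
- exact: beta_step.
- move=> j; case: (par j =P None) => [pj|pj].
    by exists (fun k => (dist j k).-1); exact: bhat_root.
  have [s Hs] := beta_upto _ (leq_subr (tau_dn j t) t.+1) j pj.
  by exists (fun k => tau_dn j t + s k)%N; exact: bhat_step.
Qed.

Definition z_delay i (Sh : 'I_N -> 'I_N -> nat) (Sb : 'I_N -> nat) k :=
  if anc i k then (if k == i then 0%N else Sh (child_to i k) k) else Sb k.

(* The update of z_i: all nodes are [i], the proper descendants of [i] and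
   the nodes not below [i]. *)
Lemma z_step_eq t (rr : 'I_N -> R) i Sh Sb :
  (forall c, par c <> None -> ahat_inv t c (Sh c)) ->
  Rmat par rr i i * (lam t i + \sum_(c | par c == Some i) ahat t c)
    + \sum_(k | ~~ anc i k) Rmat par rr i k * lam (t - Sb k)%N k
  = \sum_k Rmat par rr i k * lam (t - z_delay i Sh Sb k)%N k.
Proof.
move=> HA; rewrite mulrDr (children_ahat_all i HA) Rmat_diag_sum; last first.
  by move=> k /andP[].
rewrite [RHS](bigID (fun k => anc i k)) /= [in RHS](bigD1 i) ?anc_refl //=.
rewrite /z_delay anc_refl eqxx subn0; congr (_ + _ + _).
  by apply: eq_bigr => k /andP[aik ne]; rewrite aik (negbTE ne).
by apply: eq_bigr => k /negbTE nik; rewrite nik.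
Qed.

Lemma z_step t : (forall j, par j <> None -> exists s, ahat_inv t.+1 j s) ->
  (forall j, exists s, bhat_inv t.+1 j s) -> forall i, exists s, z_inv t.+1 i s.
Proof.
move=> /(choose_on_nonroots (fun=> 0%N))[Sh HA] /fin_all_exists[Sb HB] i.
exists (z_delay i Sh (Sb i)); split; [|split].
- move=> k; rewrite /z_delay; case: ifP => aik.
    case: (k =P i) => [->|/eqP ne]; first by rewrite dist_self.
    have [pc ack] := child_toP aik ne.
    by have := (HA _ (some_nonroot pc)).1 k ack; rewrite (dist_par_anc pc ack); nia.
  have ne : k != i by apply: contraFneq aik => ->; exact: anc_refl.
  by have := (HB i).1 k (negbT aik); have := dist_gt0 ne; nia.
- by rewrite (step_zP run) (HB i).2.1; apply: z_step_eq.
- by rewrite (step_zQ run) (HB i).2.2; apply: z_step_eq.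
Qed.

Lemma z_delayed t i : exists s, z_inv t i s.
Proof.
case: t => [|t].
  exists (fun k => (dist i k).-1); split; first by move=> k; nia.
  by rewrite (init_zP run) (init_zQ run) !lam_sum0.
by have [_ HA _ HB] := messages_invariant t.+1; exact: z_step.
Qed.

End Run.
End Tree.

Lemma dij_pred N (par : 'I_N -> option 'I_N) i j : dij par i j = (tdist par i j).-1.
Proof. by rewrite /dij; case: ifP; lia. Qed.

Lemma tdist_le_diam N (par : 'I_N -> option 'I_N) i j : tdist par i j <= diam par.
Proof.
apply: leq_trans (leq_bigmax (F := fun j => tdist par i j) j) _.
exact: (leq_bigmax (F := fun i => \max_(j < N) tdist par i j) i).
Qed.

Local Open Scope ring_scope.

Theorem lemma2 (R : realFieldType) (N : nat) (par : 'I_N -> option 'I_N)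
  (r x : 'I_N -> R) (v0 : R) (vlo vhi plo phi qlo qhi aP aQ bP bQ : 'I_N -> R)
  (gamma : R) (tau_up tau_dn : 'I_N -> nat -> nat)
  (p q v llo lhi lam zP zQ alpha betaP betaQ ahat bPhat bQhat : nat -> 'I_N -> R) :
  is_tree par ->
  (forall k, 0 <= r k) -> (forall k, 0 <= x k) ->
  (forall i, vlo i <= vhi i) -> (forall i, plo i <= phi i) ->
  (forall i, qlo i <= qhi i) ->
  (forall i, 0 < aP i) -> (forall i, 0 < aQ i) ->
  0 < gamma ->
  DistOptRun par r x v0 vlo vhi plo phi qlo qhi aP aQ bP bQ gamma tau_up tau_dn
    p q v llo lhi lam zP zQ alpha betaP betaQ ahat bPhat bQhat ->
  (* (a) zero delays *)
  ((forall j t, par j <> None -> tau_up j t = 0%N /\ tau_dn j t = 0%N) ->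
   forall (i : 'I_N) (t : nat),
     zP t i = \sum_(j : 'I_N) Rmat par r i j * lam (t - dij par i j)%N j /\
     zQ t i = \sum_(j : 'I_N) Rmat par x i j * lam (t - dij par i j)%N j)
  /\
  (* (b) delays bounded by tau_max *)
  (forall tau_max : nat,
   (forall j t, par j <> None -> (tau_up j t <= tau_max)%N /\ (tau_dn j t <= tau_max)%N) ->
   forall (i : 'I_N) (t : nat), exists taubar : 'I_N -> nat,
     (forall j, (taubar j <= (tau_max + 1) * diam par)%N) /\
     zP t i = \sum_(j : 'I_N) Rmat par r i j * lam (t - taubar j)%N j /\
     zQ t i = \sum_(j : 'I_N) Rmat par x i j * lam (t - taubar j)%N j).
Proof.
move=> tree _ _ _ _ _ _ _ _ run; split.
  move=> no_delay i t.
  have zero_bound j t' : par j <> None ->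
      (tau_up j t' <= 0)%N /\ (tau_dn j t' <= 0)%N.
    by move=> pj; have [-> ->] := no_delay j t' pj.
  (* with tau = 0 the delay of lambda_k in z_i is forced to be dist(i,k)-1 *)
  have [s [bounds [EP EQ]]] := z_delayed tree run zero_bound t i.
  have s_dij k : s k = dij par i k by have := bounds k; rewrite dij_pred; lia.
  by rewrite EP EQ; split; apply: eq_bigr => k _; rewrite s_dij.
move=> tau_max delay_bound i t.
have [s [bounds [EP EQ]]] := z_delayed tree run delay_bound t i.
exists s; split => // k.
by have := bounds k; have := tdist_le_diam par i k; nia.
Qed.
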